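(* Let $\mathfrak g$ be a complex vector space equipped with a bilinear multiplication $[\ ,\ ]:\mathfrak g\otimes\mathfrak g\to\mathfrak g$, and let $\tilde{\mathfrak g}=\mathfrak g\oplus\mathbb C$. For $\lambda\in\mathbb C$ define $\mathfrak R(\lambda):\tilde{\mathfrak g}\otimes\tilde{\mathfrak g}\to\tilde{\mathfrak g}\otimes\tilde{\mathfrak g}$ by $\mathfrak R(\lambda)\big((x+\alpha)\otimes(y+\beta)\big)=(y+\beta)\otimes(x+\alpha)+[x,y]\otimes\lambda$ for $x,y\in\mathfrak g$, $\alpha,\beta\in\mathbb C$. Let $\sigma:\tilde{\mathfrak g}\otimes\tilde{\mathfrak g}\to\tilde{\mathfrak g}\otimes\tilde{\mathfrak g}$ be the flip $u\otimes v\mapsto v\otimes u$ and set $\mathfrak R_{21}(\lambda)=\sigma\,\mathfrak R(\lambda)\,\sigma$. Then for every $\lambda\in\mathbb C$, $$\mathfrak R(\lambda)\mathfrak R_{21}(-\lambda)=\mathfrak R_{21}(\lambda)\mathfrak R(-\lambda)=1.$$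
   Context: All tensor products are over $\mathbb C$; $\lambda$ and $[x,y]$ are regarded as elements of $\tilde{\mathfrak g}=\mathfrak g\oplus\mathbb C$ via the obvious inclusions. *)

From HB Require Import structures.
From mathcomp Require Import all_boot all_order all_algebra.
From mathcomp Require Import reals.
From mathcomp.real_closed Require Import complex.
Set Implicit Arguments. Unset Strict Implicit. Unset Printing Implicit Defensive.
Import Order.TTheory GRing.Theory Num.Theory.
Local Open Scope ring_scope.

Definition is_bilinear (K : pzRingType) (V1 V2 W : lmodType K)
  (f : V1 -> V2 -> W) : Prop :=
  (forall (a : K) (x x' : V1) (y : V2), f (a *: x + x') y = a *: f x y + f x' y) /\
  (forall (a : K) (x : V1) (y y' : V2), f x (a *: y + y') = a *: f x y + f x y').

(* g~ = g (+) K, as the product module g * K (K acting on itself) *)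
Definition gtilde (K : pzRingType) (g : lmodType K) : lmodType K :=
  (g * K^o)%type.

Definition is_tensor_product (K : pzRingType) (V T : lmodType K)
  (tens : V -> V -> T) : Prop :=
  is_bilinear tens /\
  forall (W : lmodType K) (f : V -> V -> W), is_bilinear f ->
    (exists h : {linear T -> W}, forall u v, h (tens u v) = f u v) /\
    (forall h1 h2 : {linear T -> W},
        (forall u v, h1 (tens u v) = h2 (tens u v)) -> h1 =1 h2).

(** Linear maps out of the tensor product are determined by their values on
    pure tensors, where everything is explicit.  On [(x+α) ⊗ (y+β)], the map
    [σ R(μ)] is the identity plus the correction [μ ⊗ [x,y]].  Applying [R(λ)]
    to [(x+α) ⊗ (y+β) - λ ⊗ [x,y]] gives
    [(y+β) ⊗ (x+α) + [x,y] ⊗ λ - [x,y] ⊗ λ + [0,[x,y]] ⊗ λ = (y+β) ⊗ (x+α)],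
    the last term vanishing because the scalar [λ] has no component in [g].
    Composing with [σ] on either side gives both identities. *)
From HB Require Import structures.
From mathcomp Require Import all_boot all_order all_algebra.
From mathcomp Require Import reals.
From mathcomp.real_closed Require Import complex.
Set Implicit Arguments. Unset Strict Implicit.
Import GRing.Theory.
Local Open Scope ring_scope.
Local Open Scope complex_scope.

Section Bilinear.
Variables (K : pzRingType) (U V W : lmodType K) (f : U -> V -> W).
Hypothesis f_bilinear : is_bilinear f.

Lemma bilinear0l v : f 0 v = 0.
Proof.
have := f_bilinear.1 (-1) 0 0 v.
by rewrite scaleN1r oppr0 addr0 scaleN1r addNr.
Qed.

Lemma bilinear0r u : f u 0 = 0.
Proof.
have := f_bilinear.2 (-1) u 0 0.
by rewrite scaleN1r oppr0 addr0 scaleN1r addNr.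
Qed.

Lemma bilinearNr u v : f u (- v) = - f u v.
Proof.
have := f_bilinear.2 (-1) u v 0.
by rewrite !addr0 bilinear0r addr0 !scaleN1r.
Qed.

End Bilinear.

Lemma tensor_product_linear_ext (K : pzRingType) (V T W : lmodType K)
    (tens : V -> V -> T) :
  is_tensor_product tens ->
  forall h1 h2 : {linear T -> W},
    (forall u v, h1 (tens u v) = h2 (tens u v)) -> h1 =1 h2.
Proof.
move=> [[tensDl tensDr] universal] h1 h2.
have h1_tens_bilinear : is_bilinear (fun u v => h1 (tens u v)).
  by split=> *; rewrite (tensDl, tensDr) linearP.
exact: (universal W _ h1_tens_bilinear).2.
Qed.

Section RMatrix.
Variables (K : pzRingType) (g : lmodType K) (br : g -> g -> g).
Hypothesis br_bilinear : is_bilinear br.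
Variables (T : lmodType K) (tens : gtilde g -> gtilde g -> T).
Hypothesis tens_bilinear : is_bilinear tens.
Variables (sigma : {linear T -> T}) (frakR : K -> {linear T -> T}).
Hypothesis sigma_tens : forall u v, sigma (tens u v) = tens v u.
Hypothesis frakR_tens : forall (lam : K) (x y : g) (alpha beta : K),
  frakR lam (tens (x, alpha) (y, beta)) =
    tens (y, beta) (x, alpha) + tens (br x y, 0) (0, lam).

Lemma sigma_frakR_tens mu x y a b :
  sigma (frakR mu (tens (x, a) (y, b))) =
    tens (x, a) (y, b) + tens (0 : g, mu) (br x y, 0).
Proof. by rewrite frakR_tens linearD !sigma_tens. Qed.

Lemma frakR_cancel_bracket lam x y a b :
  frakR lam (tens (x, a) (y, b) + tens (0 : g, - lam) (br x y, 0)) =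
    tens (y, b) (x, a).
Proof.
have opp_lam : ((0 : g), - lam) = - (0, lam) :> gtilde g.
  by congr (_, _); rewrite oppr0.
rewrite linearD !frakR_tens (bilinear0l br_bilinear) (bilinear0l tens_bilinear).
by rewrite opp_lam (bilinearNr tens_bilinear) addr0 addrK.
Qed.

End RMatrix.

Theorem lemma1p1p2 (R : realType) (g : lmodType R[i]) (br : g -> g -> g)
  (Hbr : is_bilinear br)
  (T : lmodType R[i]) (tens : gtilde g -> gtilde g -> T)
  (HT : is_tensor_product tens)
  (sigma : {linear T -> T})
  (Hsigma : forall u v : gtilde g, sigma (tens u v) = tens v u)
  (frakR : R[i] -> {linear T -> T})
  (HfrakR : forall (lam : R[i]) (x y : g) (alpha beta : R[i]),
      frakR lam (tens (x, alpha) (y, beta)) =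
        tens (y, beta) (x, alpha) + tens (br x y, 0) (0, lam)) :
  let frakR21 := fun lam : R[i] => sigma \o frakR lam \o sigma in
  forall lam : R[i],
    (frakR lam \o frakR21 (- lam) =1 id) /\ (frakR21 lam \o frakR (- lam) =1 id).
Proof.
move=> frakR21 lam.
have sigma_frakR := sigma_frakR_tens Hsigma HfrakR.
have frakR_cancel := frakR_cancel_bracket Hbr HT.1 HfrakR.
split.
- have := tensor_product_linear_ext (h1 := frakR lam \o frakR21 (- lam)) (h2 := idfun) HT.
  apply=> -[x a] [y b] /=.
  by rewrite Hsigma sigma_frakR frakR_cancel.
- have := tensor_product_linear_ext (h1 := frakR21 lam \o frakR (- lam)) (h2 := idfun) HT.
  apply=> -[x a] [y b] /=.
  by rewrite sigma_frakR frakR_cancel Hsigma.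
Qed.
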